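(* Let $L\colon \widehat{\Delta}\to\widehat{\Box}$ be the functor given by $L(X)([1]^n) = \int^{[m]\in\Delta} X_m \times \mathbf{Poset}([1]^n,[m])$. Equivalently, $L$ is the colimit-preserving functor with $L(y[m]) = \mathbf{Poset}(-,[m])|_{\Box}$; it is the leftmost adjoint in the essential geometric embedding $\widehat{\Delta}\to\widehat{\Box}$. Then $L$ preserves monomorphisms.
   Context: $\Delta$ is the simplex category, the full subcategory of $\mathbf{Poset}$ on $[m]=\{0<\dots<m\}$, $m\ge0$. $\Box$ is the full subcategory of $\mathbf{Poset}$ on $[1]^n$, $n \ge 0$. $\widehat{\mathcal{C}}$ denotes presheaves of sets on $\mathcal{C}$ and $y$ is the Yoneda embedding. The functor $L$ is left adjoint to the functor $T\colon\widehat{\Box}\to\widehat{\Delta}$, $T(Y)=\int^{n} Y([1]^n)\times N([1]^n)$, where $N$ denotes the nerve; on representables $T(y[1]^n)=(\Delta^1)^n$. *)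

From mathcomp Require Import all_boot.
From Stdlib Require Import FunctionalExtensionality PropExtensionality ProofIrrelevance.

Set Implicit Arguments.
Unset Strict Implicit.
Unset Printing Implicit Defensive.

(* The categories Delta and Box, as full subcategories of Poset.       *)
(* [m] = {0 < ... < m} is represented by 'I_m.+1 (nat order);           *)
(* [1]^n is represented by cube n = bool^n with the product order.       *)

Definition cube (n : nat) := {ffun 'I_n -> bool}.
Definition cle (n : nat) (u v : cube n) : bool := [forall i, u i ==> v i].

Record dhom (m k : nat) := DHom {
  dfun :> 'I_m.+1 -> 'I_k.+1;
  dmono : forall i j : 'I_m.+1, i <= j -> dfun i <= dfun j }.

Record bhom (n k : nat) := BHom {
  bfun :> cube n -> cube k;
  bmono : forall u v : cube n, cle u v -> cle (bfun u) (bfun v) }.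

Record chom (n m : nat) := CHom {
  cfun :> cube n -> 'I_m.+1;
  cmono : forall u v : cube n, cle u v -> cfun u <= cfun v }.

Arguments dmono {m k} d {i j}.
Arguments bmono {n k} b {u v}.
Arguments cmono {n m} c {u v}.

Definition did (m : nat) : dhom m m := @DHom m m (fun i => i) (fun i j h => h).
Definition dcomp (m k l : nat) (g : dhom k l) (f : dhom m k) : dhom m l :=
  @DHom m l (fun i => g (f i)) (fun i j h => dmono g (dmono f h)).
Definition bid (n : nat) : bhom n n := @BHom n n (fun u => u) (fun u v h => h).
Definition bcomp (n k l : nat) (g : bhom k l) (f : bhom n k) : bhom n l :=
  @BHom n l (fun u => g (f u)) (fun u v h => bmono g (bmono f h)).
Definition dc (n m k : nat) (f : dhom m k) (p : chom n m) : chom n k :=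
  @CHom n k (fun u => f (p u)) (fun u v h => dmono f (cmono p h)).
Definition cb (n' n m : nat) (p : chom n m) (g : bhom n' n) : chom n' m :=
  @CHom n' m (fun u => p (g u)) (fun u v h => cmono p (bmono g h)).

Record sSet := SSet {
  sob :> nat -> Type;
  sact : forall m k, dhom m k -> sob k -> sob m;
  sact_id : forall m (x : sob m), sact (did m) x = x;
  sact_comp : forall m k l (f : dhom m k) (g : dhom k l) (x : sob l),
      sact (dcomp g f) x = sact f (sact g x) }.
Arguments sact {s m k}.

Record smap (X Y : sSet) := SMap {
  smf :> forall m, X m -> Y m;
  snat : forall m k (f : dhom m k) (x : X k), smf (sact f x) = sact f (smf x) }.

Record cSet := CSet {
  cob :> nat -> Type;
  cact : forall n k, bhom n k -> cob k -> cob n;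
  cact_id : forall n (x : cob n), cact (bid n) x = x;
  cact_comp : forall n k l (f : bhom n k) (g : bhom k l) (x : cob l),
      cact (bcomp g f) x = cact f (cact g x) }.
Arguments cact {c n k}.

Record cmap (X Y : cSet) := CMap {
  cmf :> forall n, X n -> Y n;
  cnat : forall n k (f : bhom n k) (x : X k), cmf (cact f x) = cact f (cmf x) }.

Definition sMono (X Y : sSet) (f : smap X Y) : Prop :=
  forall (Z : sSet) (g h : smap Z X),
    (forall m (z : Z m), f m (g m z) = f m (h m z)) ->
    forall m (z : Z m), g m z = h m z.

Definition cMono (X Y : cSet) (f : cmap X Y) : Prop :=
  forall (Z : cSet) (g h : cmap Z X),
    (forall n (z : Z n), f n (g n z) = f n (h n z)) ->
    forall n (z : Z n), g n z = h n z.

Inductive eqc (T : Type) (r : T -> T -> Prop) : T -> T -> Prop :=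
| eqc_step a b : r a b -> eqc r a b
| eqc_refl a : eqc r a a
| eqc_sym a b : eqc r a b -> eqc r b a
| eqc_trans a b c : eqc r a b -> eqc r b c -> eqc r a c.

Definition quot (T : Type) (r : T -> T -> Prop) :=
  {S : T -> Prop | exists a, S = eqc r a}.

Definition cls (T : Type) (r : T -> T -> Prop) (a : T) : quot r :=
  exist _ (eqc r a) (ex_intro _ a erefl).

Lemma eqc_map (T U : Type) (r : T -> T -> Prop) (r' : U -> U -> Prop)
  (phi : T -> U) (hphi : forall a b, r a b -> eqc r' (phi a) (phi b)) :
  forall a b, eqc r a b -> eqc r' (phi a) (phi b).
Proof.
move=> a b; elim => {a b} [a b /hphi //|a|a b _ IH|a b c _ IH1 _ IH2].
- exact: eqc_refl.
- exact: eqc_sym.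
- exact: eqc_trans IH1 IH2.
Qed.

Lemma lift_pred_eq (T U : Type) (r : T -> T -> Prop) (r' : U -> U -> Prop)
  (phi : T -> U) (hphi : forall a b, r a b -> eqc r' (phi a) (phi b)) (a : T) :
  (fun b => exists a', eqc r a a' /\ eqc r' (phi a') b) = eqc r' (phi a).
Proof.
apply: functional_extensionality => b; apply: propositional_extensionality; split.
- move=> [a' [h1 h2]]; apply: eqc_trans h2; exact: eqc_map hphi _ _ h1.
- move=> h; exists a; split=> //; exact: eqc_refl.
Qed.

Definition qlift (T U : Type) (r : T -> T -> Prop) (r' : U -> U -> Prop)
  (phi : T -> U) (hphi : forall a b, r a b -> eqc r' (phi a) (phi b))
  (S : quot r) : quot r'.
Proof.
refine (exist _ (fun b => exists a', sval S a' /\ eqc r' (phi a') b) _).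
case: S => S [a e] /=; exists (phi a); rewrite e; exact: lift_pred_eq.
Defined.

Lemma quot_ext (T : Type) (r : T -> T -> Prop) (S S' : quot r) :
  sval S = sval S' -> S = S'.
Proof.
case: S S' => S hS [S' hS'] /= e; subst S'; congr exist; exact: proof_irrelevance.
Qed.

Lemma qlift_cls (T U : Type) (r : T -> T -> Prop) (r' : U -> U -> Prop)
  (phi : T -> U) (hphi : forall a b, r a b -> eqc r' (phi a) (phi b)) (a : T) :
  qlift hphi (cls r a) = cls r' (phi a).
Proof. apply: quot_ext => /=; exact: lift_pred_eq. Qed.

Lemma cls_surj (T : Type) (r : T -> T -> Prop) (S : quot r) :
  exists a, S = cls r a.
Proof. case: S => S [a e]; exists a; apply: quot_ext => /=; exact: e. Qed.

Lemma chom_ext (n m : nat) (p q : chom n m) : (forall u, p u = q u) -> p = q.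
Proof.
case: p q => p hp [q hq] /= e.
have E : p = q by apply: functional_extensionality.
subst q; congr CHom; exact: proof_irrelevance.
Qed.

(* The functor L : sSet -> cSet,                                         *)
(* realised as the quotient of the coproduct  Sigma_m X_m x Poset(..)    *)
(* by the relation generated by (m, X(f) x, p) ~ (k, x, f o p)           *)
(* for f : [m] -> [k] in Delta.                                          *)

Definition Lpre (X : sSet) (n : nat) := {m : nat & (X m * chom n m)%type}.

Inductive Lrel (X : sSet) (n : nat) : Lpre X n -> Lpre X n -> Prop :=
| Lrel_step m k (f : dhom m k) (x : X k) (p : chom n m) :
    Lrel (existT _ m (sact f x, p)) (existT _ k (x, dc f p)).

Definition Lob (X : sSet) (n : nat) := quot (@Lrel X n).

Definition Lpre_act (X : sSet) (n' n : nat) (g : bhom n' n) (a : Lpre X n) : Lpre X n' :=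
  existT _ (projT1 a) ((projT2 a).1, cb (projT2 a).2 g).

Lemma Lpre_act_resp (X : sSet) (n' n : nat) (g : bhom n' n) (a b : Lpre X n) :
  Lrel a b -> eqc (@Lrel X n') (Lpre_act g a) (Lpre_act g b).
Proof.
case=> m k f x p; rewrite /Lpre_act /=.
have -> : cb (dc f p) g = dc f (cb p g) by apply: chom_ext.
apply: eqc_step; exact: Lrel_step.
Qed.

Definition Lact (X : sSet) (n' n : nat) (g : bhom n' n) : Lob X n -> Lob X n' :=
  qlift (@Lpre_act_resp X n' n g).

Lemma Lact_id (X : sSet) (n : nat) (S : Lob X n) : Lact (bid n) S = S.
Proof.
have [[m [x p]] ->] := cls_surj S; rewrite /Lact qlift_cls /Lpre_act /=.
by have -> : cb p (bid n) = p by apply: chom_ext.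
Qed.

Lemma Lact_comp (X : sSet) (n k l : nat) (f : bhom n k) (g : bhom k l) (S : Lob X l) :
  Lact (bcomp g f) S = Lact f (Lact g S).
Proof.
have [[m [x p]] ->] := cls_surj S; rewrite /Lact !qlift_cls /Lpre_act /=.
by have -> : cb p (bcomp g f) = cb (cb p g) f by apply: chom_ext.
Qed.

Definition L (X : sSet) : cSet := @CSet (Lob X) (@Lact X) (@Lact_id X) (@Lact_comp X).

Definition Lpre_map (X Y : sSet) (f : smap X Y) (n : nat) (a : Lpre X n) : Lpre Y n :=
  existT _ (projT1 a) (f _ (projT2 a).1, (projT2 a).2).

Lemma Lpre_map_resp (X Y : sSet) (f : smap X Y) (n : nat) (a b : Lpre X n) :
  Lrel a b -> eqc (@Lrel Y n) (Lpre_map f a) (Lpre_map f b).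
Proof.
case=> m k d x p; rewrite /Lpre_map /= snat.
apply: eqc_step; exact: Lrel_step.
Qed.

Definition Lmapf (X Y : sSet) (f : smap X Y) (n : nat) : L X n -> L Y n :=
  qlift (@Lpre_map_resp X Y f n).

Lemma Lmap_nat (X Y : sSet) (f : smap X Y) (n k : nat) (g : bhom n k) (S : L X k) :
  Lmapf f (cact g S) = cact g (Lmapf f S).
Proof.
have [[m [x p]] ->] := cls_surj S.
by rewrite /= /Lmapf /Lact !qlift_cls.
Qed.

Definition Lmap (X Y : sSet) (f : smap X Y) : cmap (L X) (L Y) :=
  @CMap (L X) (L Y) (@Lmapf X Y f) (@Lmap_nat X Y f).

(* Every element of L(X)_n, the class of a pair (x in X_m, p : [1]^n -> [m]),
   has a representative whose second component is surjective: factor p as a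
   surjection followed by an injection d and replace x by X(d) x.  For f : X -> Y
   injective, send a representative (y, p) of an element of L(Y)_n with
   p = d \o s (s surjective, d injective) to the class of (x, s), where
   f x = Y(d) y.  This assignment is well defined and invariant under the
   relation generating L(Y)_n, because surjections in Delta split and
   surjections lift uniquely against injections; on the image of L(f) it
   returns the original element, so L(f) is injective. *)
From mathcomp Require Import all_boot.
From Stdlib Require Import FunctionalExtensionality PropExtensionality ProofIrrelevance.
From Stdlib Require FinFun.

Set Implicit Arguments.
Unset Strict Implicit.
Unset Printing Implicit Defensive.

Notation surjective := FinFun.Surjective.

Lemma dhom_ext (m k : nat) (p q : dhom m k) : (forall i, p i = q i) -> p = q.
Proof.
case: p q => p hp [q hq] /= e.
have E : p = q by apply: functional_extensionality.
subst q; congr DHom; exact: proof_irrelevance.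
Qed.

Lemma dhom_inj_leq (m k : nat) (d : dhom m k) (i j : 'I_m.+1) :
  injective d -> d i <= d j -> i <= j.
Proof.
move=> d_inj le_dij; rewrite leqNgt; apply/negP => lt_ji.
have le_dji : d j <= d i by exact: dmono (ltnW lt_ji).
have /d_inj E : d i = d j by apply: val_inj; apply/eqP; rewrite eqn_leq le_dij.
by rewrite E ltnn in lt_ji.
Qed.

Lemma chom_factor (n m : nat) (p : chom n m) :
  exists r (d : dhom r m) (s : chom n r),
    [/\ injective d, surjective s & dc d s = p].
Proof.
pose im := [seq j <- iota 0 m.+1 | [exists u, val (p u) == j]].
have im_sorted : sorted ltn im.
  by apply: sorted_filter; [exact: ltn_trans | exact: iota_ltn_sorted].
have im_uniq : uniq im by exact: sorted_uniq ltn_trans ltnn _ im_sorted.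
have im_p u : val (p u) \in im.
  by rewrite mem_filter mem_iota /= add0n ltn_ord andbT; apply/existsP; exists u.
set r := (size im).-1.
have size_im : size im = r.+1.
  rewrite /r prednK //; case E: im => //; have := im_p [ffun=> false]; by rewrite E.
have index_lt u : index (val (p u)) im < r.+1 by rewrite -size_im index_mem.
have nth_lt (i : 'I_r.+1) : nth 0 im i < m.+1.
  have : nth 0 im i \in im by rewrite mem_nth // size_im.
  by rewrite mem_filter mem_iota add0n => /andP[_ /andP[]].
have d_mono (i j : 'I_r.+1) : i <= j -> Ordinal (nth_lt i) <= Ordinal (nth_lt j).
  move=> le_ij /=; apply: (sorted_leq_nth leq_trans leqnn); rewrite ?inE ?size_im //.
  by apply: sub_sorted im_sorted => a b /ltnW.
have s_mono u v : cle u v -> Ordinal (index_lt u) <= Ordinal (index_lt v).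
  move=> le_uv /=; rewrite leqNgt; apply/negP => lt_vu.
  have := sorted_ltn_index ltn_trans im_sorted _ _ (im_p v) (im_p u) lt_vu.
  by rewrite ltnNge (cmono p le_uv).
exists r, (DHom d_mono), (CHom s_mono); split.
- move=> i j /= /(congr1 val) /= /eqP; rewrite nth_uniq ?size_im // => /eqP E.
  exact: val_inj.
- move=> i; have : nth 0 im i \in im by rewrite mem_nth // size_im.
  rewrite mem_filter => /andP[/existsP[u /eqP pu] _]; exists u; apply: val_inj => /=.
  by rewrite pu index_uniq ?size_im.
- by apply: chom_ext => u; apply: val_inj; rewrite /= (nth_index 0 (im_p u)).
Qed.

(* Minimal preimages form a monotone section. *)
Lemma dhom_surj_section (r r' : nat) (e : dhom r r') :
  surjective e -> exists t : dhom r' r, forall j, e (t j) = j.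
Proof.
move=> e_surj.
pose vals := [seq val (e i) | i <- enum 'I_r.+1].
have size_vals : size vals = r.+1 by rewrite size_map size_enum_ord.
have vals_sorted : sorted leq vals.
  rewrite sorted_map; apply: (@sub_sorted _ (relpre val ltn)).
    by move=> i j /= lt_ij; exact: dmono (ltnW lt_ij).
  by rewrite -sorted_map val_enum_ord iota_ltn_sorted.
have vals_e (j : 'I_r'.+1) : val j \in vals.
  by have [i <-] := e_surj j; apply: map_f; exact: mem_enum.
have index_lt (j : 'I_r'.+1) : index (val j) vals < r.+1.
  by rewrite -size_vals index_mem.
have nth_vals k (lt_kr : k < r.+1) : nth 0 vals k = val (e (Ordinal lt_kr)).
  rewrite (nth_map ord0) ?size_enum_ord //.
  by congr (val (e _)); apply: val_inj; rewrite /= nth_enum_ord.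
have t_mono (i j : 'I_r'.+1) : i <= j -> Ordinal (index_lt i) <= Ordinal (index_lt j).
  move=> le_ij /=; rewrite leqNgt; apply/negP => lt_ji.
  have le_ji := sorted_ltn_index leq_trans vals_sorted _ _ (vals_e j) (vals_e i) lt_ji.
  have E : val i = val j by apply/eqP; rewrite eqn_leq le_ij.
  by rewrite E ltnn in lt_ji.
exists (DHom t_mono) => j; apply: val_inj.
by rewrite /= -(nth_vals _ (index_lt j)) nth_index.
Qed.

Lemma dhom_chom_lift (n m k r r' : nat) (d : dhom r m) (s : chom n r)
    (d' : dhom r' k) (s' : chom n r') (h : dhom m k) :
  injective d' -> surjective s -> dc h (dc d s) = dc d' s' ->
  exists e : dhom r r', dc e s = s' /\ dcomp d' e = dcomp h d.
Proof.
move=> d'_inj s_surj square.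
have square_at u : h (d (s u)) = d' (s' u) by rewrite -[RHS]/(dc d' s' u) -square.
have s_surjb (i : 'I_r.+1) : exists u, s u == i.
  by have [u su] := s_surj i; exists u; apply/eqP.
pose pre i := xchoose (s_surjb i).
have s_pre i : s (pre i) = i by apply/eqP; exact: (xchooseP (s_surjb i)).
have d'_pre i : d' (s' (pre i)) = h (d i) by rewrite -square_at s_pre.
have e_mono (i j : 'I_r.+1) : i <= j -> s' (pre i) <= s' (pre j).
  move=> le_ij; apply: (dhom_inj_leq d'_inj); rewrite !d'_pre.
  exact: dmono (dmono d le_ij).
exists (DHom e_mono); split.
- by apply: chom_ext => u; apply: d'_inj; rewrite /= d'_pre square_at.
- by apply: dhom_ext => i; rewrite /= d'_pre.
Qed.

Lemma cls_eqc (T : Type) (r : T -> T -> Prop) (a b : T) :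
  eqc r a b -> cls r a = cls r b.
Proof.
move=> ab; apply: quot_ext; apply: functional_extensionality => c /=.
apply: propositional_extensionality; split=> [ac | bc].
- exact: eqc_trans (eqc_sym ab) ac.
- exact: eqc_trans ab bc.
Qed.

Lemma eqc_cls (T : Type) (r : T -> T -> Prop) (a b : T) :
  cls r a = cls r b -> eqc r a b.
Proof. by move/(congr1 (@proj1_sig _ _)) => /= ->; exact: eqc_refl. Qed.

Lemma Lcls_step (X : sSet) (n m k : nat) (g : dhom m k) (x : X k) (p : chom n m) :
  cls (@Lrel X n) (existT _ m (sact g x, p)) = cls (@Lrel X n) (existT _ k (x, dc g p)).
Proof. exact/cls_eqc/eqc_step/Lrel_step. Qed.

Definition delta_repr (m : nat) : sSet.
Proof.
refine (@SSet (fun k => dhom k m) (fun k l g t => dcomp t g) _ _).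
- by move=> k t; apply: dhom_ext.
- by move=> k l j g1 g2 t; apply: dhom_ext.
Defined.

Lemma sMono_injective (X Y : sSet) (f : smap X Y) :
  sMono f -> forall m, injective (f m).
Proof.
move=> f_mono m.
pose elem (x : X m) :=
  @SMap (delta_repr m) X (fun k t => sact t x) (fun k l g t => sact_comp g t x).
move=> a b fab; have := f_mono _ (elem a) (elem b) _ m (did m).
by rewrite /= !sact_id; apply=> k t /=; rewrite !snat fab.
Qed.

Section InjectiveL.

Variables (X Y : sSet) (f : smap X Y).
Hypothesis f_inj : forall m, injective (f m).

Definition Lpreimage (n : nat) (u : Lpre Y n) (c : Lob X n) : Prop :=
  let: existT m (y, p) := u in
  exists r (d : dhom r m) (s : chom n r) (x : X r),
    [/\ injective d, surjective s, dc d s = p, f r x = sact d y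
      & c = cls (@Lrel X n) (existT _ r (x, s))].

Lemma Lpreimage_step (n m k : nat) (h : dhom m k) (y : Y k) (p : chom n m) c :
  Lpreimage (existT _ m (sact h y, p)) c <-> Lpreimage (existT _ k (y, dc h p)) c.
Proof.
split=> [[r [d [s [x [d_inj s_surj ds fx ->]]]]]
        | [r' [d' [s' [x' [d'_inj s'_surj ds' fx' ->]]]]]].
- have [r' [d' [s' [d'_inj s'_surj ds']]]] := chom_factor (dc h p).
  have [e [es d'e]] : exists e : dhom r r', dc e s = s' /\ dcomp d' e = dcomp h d.
    by apply: dhom_chom_lift; rewrite ?ds ?ds'.
  have e_surj : surjective e.
    by move=> j; have [u <-] := s'_surj j; exists (s u); rewrite -es.
  have [t et] := dhom_surj_section e_surj.
  have fx' : f r' (sact t x) = sact d' y.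
    rewrite snat fx -!sact_comp; congr (sact _ y); apply: dhom_ext => j /=.
    by rewrite -[h _]/(dcomp h d (t j)) -d'e /= et.
  have x_lift : x = sact e (sact t x).
    by apply: f_inj; rewrite snat fx' fx -!sact_comp d'e.
  exists r', d', s', (sact t x); split=> //.
  by rewrite {1}x_lift Lcls_step es.
- have [r [d [s [d_inj s_surj ds]]]] := chom_factor p.
  have [e [es d'e]] : exists e : dhom r r', dc e s = s' /\ dcomp d' e = dcomp h d.
    by apply: dhom_chom_lift; rewrite ?ds ?ds'.
  exists r, d, s, (sact e x'); split=> //.
    by rewrite snat fx' -!sact_comp d'e.
  by rewrite Lcls_step es.
Qed.

Lemma Lpreimage_eqc (n : nat) (u v : Lpre Y n) :
  eqc (@Lrel Y n) u v -> forall c, Lpreimage u c <-> Lpreimage v c.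
Proof.
elim=> {u v} [u v [m k h y p] | u | u v _ IH | u v w _ IH1 _ IH2] c.
- exact: Lpreimage_step.
- by [].
- by rewrite IH.
- by rewrite IH1 IH2.
Qed.

Lemma Lpreimage_map (n : nat) (a : Lpre X n) c :
  Lpreimage (Lpre_map f a) c <-> c = cls (@Lrel X n) a.
Proof.
case: a => m [x p]; split=> [[r [d [s [x' [_ _ ds fx' ->]]]]] | ->].
- have -> : x' = sact d x by apply: f_inj; rewrite fx' snat.
  by rewrite Lcls_step ds.
- have [r [d [s [d_inj s_surj ds]]]] := chom_factor p.
  exists r, d, s, (sact d x); split=> //; first by rewrite snat.
  by rewrite Lcls_step ds.
Qed.

Lemma Lmap_injective (n : nat) : injective (Lmap f n).
Proof.
move=> S1 S2; have [a ->] := cls_surj S1; have [b ->] := cls_surj S2.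
rewrite /= /Lmapf !qlift_cls => fab.
have := (Lpreimage_eqc (eqc_cls fab) _).1 ((Lpreimage_map a _).2 erefl).
by move/Lpreimage_map.
Qed.

End InjectiveL.

Theorem mainTheorem6 (X Y : sSet) (f : smap X Y) :
  sMono f -> cMono (Lmap f).
Proof.
move=> f_mono Z g h fg_fh n z.
exact: Lmap_injective (sMono_injective f_mono) _ _ _ (fg_fh n z).
Qed.
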